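(* Let $n,m\in\mathbb{N}$, let $\mathcal{Y}\subset\mathbb{R}^m$ be nonempty, convex and compact, and let $f:2^{[n]}\times\mathbb{R}^m\to\mathbb{R}$ be such that $f(\cdot,y)$ is submodular for every $y$ and $f(S,\cdot)$ is concave and continuous for every $S\subset[n]$. Let $f^L$ be the Lovász extension of $f$ with respect to the first variable. Then $$\max_{y\in\mathcal{Y}}\min_{S\subset[n]}f(S,y)\le\min_{S\subset[n]}\max_{y\in\mathcal{Y}}f(S,y).$$ Moreover, if $$\min_{x\in[0,1]^n}\max_{y\in\mathcal{Y}}f^L(x,y)=\min_{x\in\{0,1\}^n}\max_{y\in\mathcal{Y}}f^L(x,y),$$ then $\max_{y\in\mathcal{Y}}\min_{S\subset[n]}f(S,y)=\min_{S\subset[n]}\max_{y\in\mathcal{Y}}f(S,y)=\min_{x\in[0,1]^n}\max_{y\in\mathcal{Y}}f^L(x,y)$, and $f$ admits a saddle point on $2^{[n]}\times\mathcal{Y}$.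
   Context: $[n]=\{1,\dots,n\}$; subsets $S\subset[n]$ are identified with their indicator vectors $\chi_S\in\{0,1\}^n$. A set function $g:2^{[n]}\to\mathbb{R}$ is submodular if $g(S)+g(T)\ge g(S\cap T)+g(S\cup T)$ for all $S,T\subset[n]$. Lovász extension: for $g:2^{[n]}\to\mathbb{R}$ and $x\in[0,1]^n$, choose a permutation $(j_1,\dots,j_n)$ of $[n]$ with $x_{j_1}\ge\dots\ge x_{j_n}$ and set $g^L(x)=(1-x_{j_1})\,g(\emptyset)+\sum_{k=1}^{n-1}(x_{j_k}-x_{j_{k+1}})\,g(\{j_1,\dots,j_k\})+x_{j_n}\,g([n])$. For $f:2^{[n]}\times\mathbb{R}^m\to\mathbb{R}$, the Lovász extension with respect to the first variable is $f^L(x,y):=(f(\cdot,y))^L(x)$. A saddle point of $f$ on $2^{[n]}\times\mathcal{Y}$ is a pair $(S^*,y^* )\in2^{[n]}\times\mathcal{Y}$ with $f(S^*,y)\le f(S^*,y^* )\le f(S,y^* )$ for all $S\subset[n]$, $y\in\mathcal{Y}$. *)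

From HB Require Import structures.
From mathcomp Require Import all_boot all_order all_algebra.
From mathcomp Require Import all_classical all_reals all_analysis.
Set Implicit Arguments. Unset Strict Implicit. Unset Printing Implicit Defensive.
Import Order.TTheory GRing.Theory Num.Theory.
Import numFieldNormedType.Exports.
Local Open Scope classical_set_scope.
Local Open Scope ring_scope.

Definition submodular (R : realType) (n : nat) (g : {set 'I_n} -> R) :=
  forall S T : {set 'I_n}, g (S :&: T) + g (S :|: T) <= g S + g T.

Definition convex_subset (R : realType) (m : nat) (Y : set 'rV[R]_m) :=
  forall a b : 'rV[R]_m, forall t : R, Y a -> Y b -> 0 <= t -> t <= 1 ->
    Y (t *: a + (1 - t) *: b).

Definition concave_fun (R : realType) (m : nat) (h : 'rV[R]_m -> R) :=
  forall a b : 'rV[R]_m, forall t : R, 0 <= t -> t <= 1 ->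
    t * h a + (1 - t) * h b <= h (t *: a + (1 - t) *: b).

(* A sorting permutation (j_1,...,j_n) of [n] with x_{j_1} >= ... >= x_{j_n},
   represented as the list js (index k-1 holds j_k). *)
Definition lovasz_order (R : realType) (n : nat) (x : 'I_n -> R) : seq 'I_n :=
  sort (fun i j => x j <= x i) (enum 'I_n).

(* Lovasz extension, with the conventions x_{j_0} := 1 and x_{j_{n+1}} := 0,
   so that g^L(x) = sum_{k=0}^{n} (x_{j_k} - x_{j_{k+1}}) g({j_1,...,j_k}),
   which is exactly the formula of the paper. *)
Definition lovasz (R : realType) (n : nat) (g : {set 'I_n} -> R)
    (x : 'I_n -> R) : R :=
  let js := lovasz_order x in
  let t := fun k : nat =>
    if k == 0%N then 1
    else if (k <= n)%N then
      (match js with [::] => 0 | j0 :: _ => x (nth j0 js k.-1) end)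
    else 0 in
  \sum_(k < n.+1) (t k - t k.+1) * g (finset (fun j => j \in take k js)).

Definition lovasz2 (R : realType) (n m : nat)
    (f : {set 'I_n} -> 'rV[R]_m -> R) (x : 'I_n -> R) (y : 'rV[R]_m) : R :=
  lovasz (fun S => f S y) x.

Definition saddle_point (R : realType) (n m : nat)
    (f : {set 'I_n} -> 'rV[R]_m -> R) (Y : set 'rV[R]_m)
    (S0 : {set 'I_n}) (y0 : 'rV[R]_m) :=
  Y y0 /\ (forall y, Y y -> f S0 y <= f S0 y0) /\
  (forall S, f S0 y0 <= f S y0).

Definition cube01 (R : realType) (n : nat) : set ('I_n -> R) :=
  [set x | forall i, 0 <= x i <= 1].
Definition vert01 (R : realType) (n : nat) : set ('I_n -> R) :=
  [set x | forall i, x i = 0 \/ x i = 1].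

(* Weak duality is immediate, and on {0,1}^n the Lovasz extension is f itself,
   so the discrete relaxation is at least min-max.  For the converse bound on
   the continuous relaxation, fix c above max-min and minimise the convex penalty
   sum_S max(c - f(S,y), 0)^2 over Y; its first-order condition at a minimiser
   y0, normalised, is a probability p on subsets with sum_S p_S f(S,y) <= c on
   all of Y.  By submodularity the Lovasz extension at x = sum_S p_S chi_S is at
   most sum_S p_S f(S,y).  Hence relax[0,1]^n <= max-min <= min-max <= relax{0,1}^n,
   the hypothesis makes these equal, and the optimal S and y form a saddle point. *)

From HB Require Import structures.
From mathcomp Require Import all_boot all_order all_algebra.
From mathcomp Require Import all_classical all_reals all_analysis.
From mathcomp Require Import ring lra.
Import Order.TTheory GRing.Theory Num.Theory.
Import numFieldNormedType.Exports.
Local Open Scope classical_set_scope.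
Local Open Scope ring_scope.

Section RealFacts.
Context {R : realType}.

Lemma sup_image_max (T : Type) (A : set T) (h : T -> R) t :
  A t -> (forall s, A s -> h s <= h t) -> sup [set h s | s in A] = h t.
Proof.
move=> At ht; apply/le_anti/andP; split.
  by apply: ge_sup; [exists (h t), t | move=> _ [s As <-]; exact: ht].
by apply: ub_le_sup; [exists (h t) => _ [s As <-]; exact: ht | exists t].
Qed.

Lemma inf_image_min (T : Type) (A : set T) (h : T -> R) t :
  A t -> (forall s, A s -> h t <= h s) -> inf [set h s | s in A] = h t.
Proof.
move=> At ht; apply/le_anti/andP; split.
  by apply: ge_inf; [exists (h t) => _ [s As <-]; exact: ht | exists t].
by apply: lb_le_inf; [exists (h t), t | move=> _ [s As <-]; exact: ht].
Qed.

Lemma bigmin_attained {I : finType} (j : I) (F : I -> R) :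
  exists i, \big[Order.min/F j]_i F i = F i.
Proof.
case: (arg_minP F (isT : predT j)) => i _ Fi_min; exists i.
apply/le_anti; rewrite bigmin_le /=; apply/bigmin_geP; split=> //.
exact: Fi_min.
Qed.

Lemma linear_coef_ge0 (A B : R) :
  (forall t, 0 < t -> t <= 1 -> 0 <= 2 * t * A + t ^+ 2 * B) -> 0 <= A.
Proof.
move=> h; rewrite leNgt; apply/negP => A_lt0.
have B_gt0 : 0 < B by have := h 1 ltr01 (lexx 1); rewrite expr1n; lra.
(* the quadratic is minimal at t = -A/B, where it equals -A^2/B < 0 *)
have t_gt0 : 0 < - A / B by rewrite divr_gt0 // oppr_gt0.
have t_le1 : - A / B <= 1.
  by rewrite ler_pdivrMr // mul1r; have := h 1 ltr01 (lexx 1); rewrite expr1n; lra.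
have := h _ t_gt0 t_le1.
have -> : 2 * (- A / B) * A + (- A / B) ^+ 2 * B = - (A ^+ 2 / B).
  by field; rewrite gt_eqF.
by rewrite oppr_ge0 leNgt divr_gt0 // expr2 nmulr_rgt0.
Qed.

Lemma sqr_pos_part_le (v u s : R) : v <= u + s ->
  Num.max v 0 ^+ 2 <= Num.max u 0 ^+ 2 + 2 * (Num.max u 0 * s) + s ^+ 2.
Proof.
move=> vus; have := sqr_ge0 (u + s); rewrite expr2 => sq_ge0.
by case: (lerP 0 v) => hv; case: (lerP 0 u) => hu;
  rewrite ?(max_l hv) ?(max_r (ltW hv)) ?(max_l hu) ?(max_r (ltW hu)) !expr2; nra.
Qed.

End RealFacts.

Lemma continuous_bigmin {R : realType} {T : topologicalType} (I : Type) (s : seq I)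
    (F0 : T -> R) (F : I -> T -> R) :
  continuous F0 -> (forall i, continuous (F i)) ->
  continuous (fun t => \big[Order.min/F0 t]_(i <- s) F i t).
Proof.
move=> F0_cont F_cont; elim: s => [|i s IHs]; first by under eq_fun do rewrite big_nil.
under eq_fun do rewrite big_cons.
by move=> t; apply: continuous_min; [exact: F_cont | exact: IHs].
Qed.

Section MixedStrategy.
Context {R : realType} {m : nat} {I : finType}.
Variables (Y : set 'rV[R]_m) (F : I -> 'rV[R]_m -> R) (c : R).
Hypotheses (Y0 : Y !=set0) (Y_convex : convex_subset Y) (Y_compact : compact Y).
Hypotheses (F_concave : forall i, concave_fun (F i))
  (F_cont : forall i, continuous (F i)).

Let excess i y := Num.max (c - F i y) 0.
Let penalty y := \sum_i excess i y ^+ 2.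

Lemma excess_ge0 i y : 0 <= excess i y.
Proof. by rewrite le_max lexx orbT. Qed.

Lemma penalty_continuous : continuous penalty.
Proof.
apply: (continuous_big add_continuous) => i _ y.
have excess_cont : {for y, continuous (excess i)}.
  apply: continuous_max; last exact: cst_continuous.
  by apply: continuousB; [exact: cst_continuous | exact: F_cont].
by under eq_fun do rewrite expr2; exact: continuousM.
Qed.

(* By concavity, along the segment from the minimiser y0 towards y the penalty
   is bounded by |e|^2 + 2 t (e . b) + t^2 |b|^2 with e = excess y0, so e . b >= 0. *)
Lemma penalty_min_first_order y0 : Y y0 -> (forall y, Y y -> penalty y0 <= penalty y) ->
  forall y, Y y -> 0 <= \sum_i excess i y0 * (c - F i y).
Proof.
move=> Yy0 y0_min y Yy.
pose b i := F i y0 - F i y.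
have slope_ge0 : 0 <= \sum_i excess i y0 * b i.
  apply: (@linear_coef_ge0 _ _ (\sum_i b i ^+ 2)) => t t_gt0 t_le1.
  have Yt : Y (t *: y + (1 - t) *: y0) by apply: Y_convex => //; exact: ltW.
  have := y0_min _ Yt; rewrite /penalty => le_penalty.
  have : \sum_i excess i (t *: y + (1 - t) *: y0) ^+ 2 <=
      \sum_i (excess i y0 ^+ 2 + 2 * (excess i y0 * (t * b i)) + (t * b i) ^+ 2).
    apply: ler_sum => i _; apply: sqr_pos_part_le.
    by have := F_concave i y y0 t (ltW t_gt0) t_le1; rewrite /b; nra.
  rewrite !big_split /= -!mulr_sumr /=.
  have -> : \sum_i excess i y0 * (t * b i) = t * \sum_i excess i y0 * b i.
    by rewrite mulr_sumr; apply: eq_bigr => i _; rewrite mulrCA.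
  have -> : \sum_i (t * b i) ^+ 2 = t ^+ 2 * \sum_i b i ^+ 2.
    by rewrite mulr_sumr; apply: eq_bigr => i _; rewrite exprMn.
  lra.
rewrite (eq_bigr (fun i => excess i y0 * (c - F i y0) + excess i y0 * b i)); last first.
  by move=> i _; rewrite /b; ring.
rewrite big_split /=; apply: addr_ge0 => //; apply: sumr_ge0 => i _.
by rewrite /excess; case: (lerP 0 (c - F i y0)) => h; rewrite ?mul0r ?mulr_ge0.
Qed.

Lemma mixed_strategy_le : (forall y, Y y -> exists i, F i y < c) ->
  exists p : I -> R, [/\ forall i, 0 <= p i, \sum_i p i = 1 &
    forall y, Y y -> \sum_i p i * F i y <= c].
Proof.
move=> beaten.
have [y0 Yy0 y0_min] := EVT_min_rV Y0 Y_compact (continuous_subspaceT penalty_continuous).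
rewrite inE in Yy0.
have first_order := penalty_min_first_order _ Yy0 (fun y Yy => y0_min y (mem_set Yy)).
pose D := \sum_i excess i y0.
have D_gt0 : 0 < D.
  have [i Fi_lt] := beaten _ Yy0.
  rewrite /D (bigD1 i) //=; apply: (@lt_le_trans _ _ (excess i y0)).
    by rewrite lt_max subr_gt0 Fi_lt.
  by rewrite lerDl; apply: sumr_ge0 => j _; exact: excess_ge0.
exists (fun i => excess i y0 / D); split.
- by move=> i; rewrite divr_ge0 ?excess_ge0 ?ltW.
- by rewrite -mulr_suml divff // gt_eqF.
move=> y Yy; have := first_order y Yy.
under eq_bigr do rewrite mulrBr.
rewrite sumrB -mulr_suml -/D subr_ge0 => le_c.
under eq_bigr do rewrite mulrAC.
by rewrite -mulr_suml ler_pdivrMr // mulrC.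
Qed.

End MixedStrategy.

Lemma sum_by_parts {R : comPzRingType} (T G : nat -> R) N :
  \sum_(k < N.+1) (T k - T k.+1) * G k =
  T 0%N * G 0%N + \sum_(k < N) T k.+1 * (G k.+1 - G k) - T N.+1 * G N.
Proof.
elim: N => [|N IHN]; first by rewrite big_ord1 big_ord0; ring.
by rewrite big_ord_recr IHN big_ord_recr /=; ring.
Qed.

Section LovaszExtension.
Context {R : realType} {n : nat}.
Implicit Types (x : 'I_n -> R) (g : {set 'I_n} -> R).

(* In the notation of [lovasz], [lovasz_level x k] is the value x_{j_k}
   (with x_{j_0} = 1 and x_{j_k} = 0 for k > n) and [lovasz_chain x k] is
   the set {j_1, ..., j_k}. *)
Definition lovasz_level x (k : nat) : R :=
  if k == 0%N then 1
  else if (k <= n)%N then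
    (match lovasz_order x with
     | [::] => 0 | j0 :: _ => x (nth j0 (lovasz_order x) k.-1) end)
  else 0.

Definition lovasz_chain x (k : nat) : {set 'I_n} :=
  [set j | j \in take k (lovasz_order x)].

Lemma lovaszE g x : lovasz g x =
  \sum_(k < n.+1) (lovasz_level x k - lovasz_level x k.+1) * g (lovasz_chain x k).
Proof. by []. Qed.

Lemma size_lovasz_order x : size (lovasz_order x) = n.
Proof. by rewrite size_sort size_enum_ord. Qed.

Lemma sorted_lovasz_order x : sorted (fun i j => x j <= x i) (lovasz_order x).
Proof. by apply: sort_sorted => i j; exact: le_total. Qed.

Lemma lovasz_level0 x : lovasz_level x 0 = 1. Proof. by []. Qed.

Lemma lovasz_level_gtn x k : (n < k)%N -> lovasz_level x k = 0.
Proof. by rewrite /lovasz_level; case: k => // k nk; rewrite leqNgt nk. Qed.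

Lemma lovasz_levelS x (i0 : 'I_n) {k : nat} : (k < n)%N ->
  lovasz_level x k.+1 = x (nth i0 (lovasz_order x) k).
Proof.
move=> kn; rewrite /lovasz_level /= kn.
have := size_lovasz_order x; case E: (lovasz_order x) => [|j0 s] /=.
  by move=> n0; rewrite -n0 in kn.
by move=> _; rewrite -E; apply: congr1; apply: set_nth_default; rewrite size_lovasz_order.
Qed.

Lemma lovasz_level_cube x k : cube01 x -> 0 <= lovasz_level x k <= 1.
Proof.
case: k => [|k] x01; first by rewrite lovasz_level0 ler01 lexx.
case: (ltnP k n) => kn; last by rewrite lovasz_level_gtn ?ltnS // lexx ler01.
by rewrite (lovasz_levelS _ (Ordinal kn) kn); apply: x01.
Qed.

Lemma lovasz_level_vert x k : vert01 x -> lovasz_level x k = 0 \/ lovasz_level x k = 1.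
Proof.
case: k => [|k] x01; first by right.
case: (ltnP k n) => kn; last by left; rewrite lovasz_level_gtn.
by rewrite (lovasz_levelS _ (Ordinal kn) kn); apply: x01.
Qed.

Lemma lovasz_level_nonincr x k : cube01 x -> lovasz_level x k.+1 <= lovasz_level x k.
Proof.
case: k => [|k] x01; first by rewrite lovasz_level0; case/andP: (lovasz_level_cube x 1 x01).
case: (ltnP k.+1 n) => kn; last first.
  by rewrite lovasz_level_gtn ?ltnS //; case/andP: (lovasz_level_cube x k.+1 x01).
have i0 : 'I_n := Ordinal kn.
rewrite (lovasz_levelS _ i0 kn) (lovasz_levelS _ i0 (ltnW kn)).
apply: (@sorted_leq_nth _ (fun i j => x j <= x i)) => //.
- by move=> a b c ba cb; exact: le_trans cb ba.
- exact: sorted_lovasz_order.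
- by rewrite inE size_lovasz_order ltnW.
- by rewrite inE size_lovasz_order.
Qed.

Lemma lovasz_weight_ge0 x k : cube01 x -> 0 <= lovasz_level x k - lovasz_level x k.+1.
Proof. by move=> x01; rewrite subr_ge0 lovasz_level_nonincr. Qed.

Lemma lovasz_weight_sum x :
  \sum_(k < n.+1) (lovasz_level x k - lovasz_level x k.+1) = 1.
Proof.
have := sum_by_parts (lovasz_level x) (fun=> 1) n.
under eq_bigr do rewrite mulr1.
move=> ->; rewrite big1 => [|k _]; last by rewrite subrr mulr0.
by rewrite lovasz_level0 lovasz_level_gtn // !mulr1 addr0 subr0.
Qed.

Lemma le_lovasz g x lo : cube01 x -> (forall S, lo <= g S) -> lo <= lovasz g x.
Proof.
move=> x01 lo_g; rewrite lovaszE -[lo]mul1r -(lovasz_weight_sum x) mulr_suml.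
by apply: ler_sum => k _; rewrite ler_wpM2l ?lovasz_weight_ge0.
Qed.

Lemma lovasz_le g x hi : cube01 x -> (forall S, g S <= hi) -> lovasz g x <= hi.
Proof.
move=> x01 g_hi; rewrite lovaszE -[hi]mul1r -(lovasz_weight_sum x) mulr_suml.
by apply: ler_sum => k _; rewrite ler_wpM2l ?lovasz_weight_ge0.
Qed.

Lemma vert01_cube01 {x} : vert01 x -> cube01 x.
Proof. by move=> x01 i; case: (x01 i) => ->; rewrite ?lexx ?ler01. Qed.

(* At a vertex all the weights are 0 or 1 and they sum to 1. *)
Lemma lovasz_vert {x} : vert01 x -> exists k, forall g, lovasz g x = g (lovasz_chain x k).
Proof.
move=> x01; pose w k := lovasz_level x k - lovasz_level x k.+1.
have w01 k : w k = 0 \/ w k = 1.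
  have := lovasz_weight_ge0 x k (vert01_cube01 x01); rewrite /w.
  case: (lovasz_level_vert x k x01) => ->; case: (lovasz_level_vert x k.+1 x01) => ->;
    rewrite ?subrr ?subr0 ?sub0r ?oppr_ge0 ?ler10; by [left | right].
have [k0 wk0_neq0 | w_eq0] := pickP (fun k : 'I_n.+1 => w k != 0); last first.
  have := lovasz_weight_sum x; rewrite big1 => [/eqP|k _]; last exact/eqP/negbFE/w_eq0.
  by rewrite eq_sym oner_eq0.
have wk0 : w k0 = 1 by case: (w01 k0) wk0_neq0 => ->; rewrite ?eqxx.
have w_others : \sum_(k < n.+1 | k != k0) w k = 0.
  have := lovasz_weight_sum x; rewrite (bigD1 k0) //= -/(w k0) wk0.
  by move/(canRL (addKr 1)); rewrite addNr.
have w_eq0 k : k != k0 -> w k = 0.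
  by move: k; apply/psumr_eq0P => // k _; exact: lovasz_weight_ge0 x _ (vert01_cube01 x01).
exists k0 => g; rewrite lovaszE (bigD1 k0) //= -/(w k0) wk0 mul1r big1 ?addr0 //.
by move=> k /w_eq0; rewrite -/(w k) => ->; rewrite mul0r.
Qed.

Lemma lovasz_chain0 x : lovasz_chain x 0 = finset.set0.
Proof. by apply/setP => j; rewrite !inE take0. Qed.

Lemma lovasz_chainT x : lovasz_chain x n = finset.setT.
Proof.
apply/setP => j.
by rewrite !inE take_oversize ?size_lovasz_order // mem_sort mem_enum.
Qed.

Lemma lovasz_chainS x (i0 : 'I_n) {k : nat} : (k < n)%N ->
  lovasz_chain x k.+1 = nth i0 (lovasz_order x) k |: lovasz_chain x k.
Proof.
move=> kn; apply/setP => j.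
by rewrite !inE (take_nth i0) ?size_lovasz_order // mem_rcons in_cons.
Qed.

(* Submodularity: adding j_{k+1} to the chain gains at most as much as adding
   it to the subset S :&: chain. *)
Lemma chain_gains_le {g} x (i0 : 'I_n) (S : {set 'I_n}) {K : nat} :
  submodular g -> (K <= n)%N ->
  g finset.set0 + \sum_(0 <= k < K) (nth i0 (lovasz_order x) k \in S)%:R *
      (g (lovasz_chain x k.+1) - g (lovasz_chain x k))
  <= g (S :&: lovasz_chain x K).
Proof.
move=> g_sub; elim: K => [|K IHK] Kn.
  by rewrite big_geq // addr0 lovasz_chain0 finset.setI0.
rewrite big_nat_recr //= (lovasz_chainS x i0 Kn).
set a := nth i0 (lovasz_order x) K; set C := lovasz_chain x K.
have {}IHK := IHK (ltnW Kn).
have [aS|aNS] := boolP (a \in S); last first.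
  rewrite mul0r addr0; suff -> : S :&: (a |: C) = S :&: C by [].
  by apply/setP => j; rewrite !inE; case: eqVneq => // ->; rewrite (negbTE aNS).
have := g_sub (S :&: (a |: C)) C.
have -> : S :&: (a |: C) :&: C = S :&: C.
  by apply/setP => j; rewrite !inE; case: eqVneq => [->|_]; rewrite ?aS //= -andbA andbb.
have -> : S :&: (a |: C) :|: C = a |: C.
  apply/setP => j; rewrite !inE; case: eqVneq => [->|_]; rewrite ?aS //=.
  by case: (j \in S); rewrite /= ?orbb.
rewrite /= mul1r; lra.
Qed.

Lemma lovasz_le_mixture g x (p : {set 'I_n} -> R) : submodular g ->
  (forall S, 0 <= p S) -> \sum_S p S = 1 ->
  (forall i, x i = \sum_S p S * (i \in S)%:R) ->
  lovasz g x <= \sum_S p S * g S.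
Proof.
move=> g_sub p_ge0 p_sum1 xE.
rewrite lovaszE (sum_by_parts _ (fun k => g (lovasz_chain x k))).
rewrite lovasz_level0 lovasz_level_gtn // mul1r mul0r subr0 lovasz_chain0.
case: (posnP n) => [n0|n_gt0].
  have all_set0 (S : {set 'I_n}) : S = finset.set0.
    by apply/setP => i; have := ltn_ord i; rewrite {2}n0.
  rewrite big1 => [|k _]; last by have := ltn_ord k; rewrite {2}n0.
  rewrite (eq_bigr (fun S => p S * g finset.set0)) => [|S _]; last by rewrite [S]all_set0.
  by rewrite -mulr_suml p_sum1 mul1r addr0.
pose i0 := Ordinal n_gt0.
have -> : \sum_(k < n) lovasz_level x k.+1 *
    (g (lovasz_chain x k.+1) - g (lovasz_chain x k)) =
  \sum_S p S * \sum_(0 <= k < n) (nth i0 (lovasz_order x) k \in S)%:R *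
    (g (lovasz_chain x k.+1) - g (lovasz_chain x k)).
  under eq_bigr => k _ do rewrite (lovasz_levelS _ i0 (ltn_ord k)) xE mulr_suml.
  rewrite exchange_big /=; apply: eq_bigr => S _.
  by rewrite big_mkord mulr_sumr; apply: eq_bigr => k _; rewrite mulrA.
have -> : g finset.set0 = \sum_S p S * g finset.set0 by rewrite -mulr_suml p_sum1 mul1r.
rewrite -big_split /=.
apply: ler_sum => S _; rewrite -mulrDr ler_wpM2l //.
by have := chain_gains_le x i0 S g_sub (leqnn n); rewrite lovasz_chainT finset.setIT.
Qed.

End LovaszExtension.

Lemma sup_image_compact {R : realType} {m : nat} {Y : set 'rV[R]_m} {h : 'rV[R]_m -> R} :
  Y !=set0 -> compact Y -> continuous h ->
  exists2 c, Y c & sup [set h y | y in Y] = h c /\ forall y, Y y -> h y <= h c.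
Proof.
move=> Y0 Y_compact h_cont.
have [c /set_mem Yc c_max] := EVT_max_rV Y0 Y_compact (continuous_subspaceT h_cont).
have {}c_max y : Y y -> h y <= h c by move=> Yy; exact/c_max/mem_set.
by exists c => //; split=> //; exact: sup_image_max.
Qed.

Section SubmodularMinimax.
Context {R : realType} {n m : nat}.
Variables (Y : set 'rV[R]_m) (f : {set 'I_n} -> 'rV[R]_m -> R).

Definition maxmin := sup [set inf [set f S y | S in [set: {set 'I_n}]] | y in Y].
Definition minmax := inf [set sup [set f S y | y in Y] | S in [set: {set 'I_n}]].
Definition relax (D : set ('I_n -> R)) :=
  inf [set sup [set lovasz2 f x y | y in Y] | x in D].

Definition min_over_sets y := \big[Order.min/f finset.set0 y]_S f S y.
Definition max_over_Y S := sup [set f S y | y in Y].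

Hypotheses (Y0 : Y !=set0) (Y_convex : convex_subset Y) (Y_compact : compact Y).
Hypotheses (f_submod : forall y, submodular (fun S => f S y))
  (f_concave : forall S, concave_fun (f S)) (f_cont : forall S, continuous (f S)).

Lemma min_over_sets_le y S : min_over_sets y <= f S y.
Proof. exact: bigmin_le. Qed.

Lemma inf_over_setsE y : inf [set f S y | S in [set: {set 'I_n}]] = min_over_sets y.
Proof.
have [S0 S0_min] := bigmin_attained finset.set0 (f^~ y).
rewrite /min_over_sets S0_min; apply: inf_image_min => // S _.
by rewrite -S0_min; exact: bigmin_le.
Qed.

Lemma maxmin_attained : exists2 ys, Y ys &
  maxmin = min_over_sets ys /\ forall y, Y y -> min_over_sets y <= maxmin.
Proof.
have min_cont : continuous min_over_sets by exact: continuous_bigmin.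
have [ys Yys [sup_eq ys_max]] := sup_image_compact Y0 Y_compact min_cont.
have maxmin_eq : maxmin = min_over_sets ys.
  by rewrite /maxmin (eq_imagel (fun y _ => inf_over_setsE y)).
by exists ys => //; rewrite maxmin_eq.
Qed.

Lemma f_le_max_over_Y S {y} : Y y -> f S y <= max_over_Y S.
Proof.
have [yS _ [sup_eq yS_max]] := sup_image_compact Y0 Y_compact (f_cont S).
by rewrite /max_over_Y sup_eq; exact: yS_max.
Qed.

Lemma minmax_attained : exists S0,
  minmax = max_over_Y S0 /\ forall S, minmax <= max_over_Y S.
Proof.
case: (arg_minP max_over_Y (isT : predT finset.set0)) => S0 _ S0_min.
have minmax_eq : minmax = max_over_Y S0.
  by apply: inf_image_min => // S _; exact: S0_min.
by exists S0; rewrite minmax_eq; split=> // S; exact: S0_min.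
Qed.

Lemma maxmin_le_minmax : maxmin <= minmax.
Proof.
have [ys Yys [-> _]] := maxmin_attained; have [S0 [-> _]] := minmax_attained.
exact: le_trans (min_over_sets_le ys S0) (f_le_max_over_Y S0 Yys).
Qed.

Lemma minmax_le_relax_vert : minmax <= relax (@vert01 R n).
Proof.
apply: lb_le_inf.
  by exists (sup [set lovasz2 f (fun=> 0) y | y in Y]), (fun=> 0) => // i; left.
move=> _ [x x01 <-]; have [k lovasz_vertE] := lovasz_vert x01.
have [_ [_ minmax_le]] := minmax_attained.
by rewrite (eq_imagel (fun y _ => lovasz_vertE (f^~ y))); exact: minmax_le.
Qed.

Lemma lovasz2_le_bigmax x y : cube01 x -> Y y ->
  lovasz2 f x y <= \big[Order.max/0]_S max_over_Y S.
Proof.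
move=> x01 Yy; apply: lovasz_le => // S.
exact: le_trans (f_le_max_over_Y S Yy) (le_bigmax _ _ _).
Qed.

Lemma maxmin_le_sup_lovasz2 x : cube01 x -> maxmin <= sup [set lovasz2 f x y | y in Y].
Proof.
move=> x01; have [ys Yys [-> _]] := maxmin_attained.
apply: le_trans (_ : lovasz2 f x ys <= _).
  by apply: le_lovasz => // S; exact: min_over_sets_le.
apply: ub_le_sup; last by exists ys.
by exists (\big[Order.max/0]_S max_over_Y S) => _ [y Yy <-]; exact: lovasz2_le_bigmax.
Qed.

(* For c above the max-min value, the mean indicator vector of a mixed strategy
   beating c is a point of the cube where the Lovasz extension stays below c. *)
Lemma relax_cube_le_maxmin : relax (@cube01 R n) <= maxmin.
Proof.
apply/ler_addgt0Pr => e e_gt0; set c := maxmin + e.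
have [_ _ [_ le_maxmin]] := maxmin_attained.
have beaten y : Y y -> exists S, f S y < c.
  move=> Yy; have [S S_min] := bigmin_attained finset.set0 (f^~ y).
  by exists S; rewrite -S_min (le_lt_trans (le_maxmin _ Yy)) // ltrDl.
have [p [p_ge0 p_sum1 p_le]] :=
  mixed_strategy_le _ _ c Y0 Y_convex Y_compact f_concave f_cont beaten.
pose x i := \sum_S p S * (i \in S)%:R.
have x01 : cube01 x.
  move=> i; rewrite sumr_ge0 => [|S _]; last by rewrite mulr_ge0.
  by rewrite -p_sum1 ler_sum // => S _; case: (i \in S); rewrite ?mulr1 ?mulr0.
apply: (@le_trans _ _ (sup [set lovasz2 f x y | y in Y])).
  apply: ge_inf; last by exists x.
  by exists maxmin => _ [x' x'01 <-]; exact: maxmin_le_sup_lovasz2.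
apply: ge_sup; first by case: Y0 => y Yy; exists (lovasz2 f x y), y.
move=> _ [y Yy <-]; apply: le_trans (p_le y Yy).
exact: lovasz_le_mixture.
Qed.

Lemma saddle_point_of_maxmin_eq : maxmin = minmax -> exists S0 y0, saddle_point f Y S0 y0.
Proof.
have [ys Yys [maxmin_eq _]] := maxmin_attained.
have [S0 [minmax_eq _]] := minmax_attained.
rewrite maxmin_eq minmax_eq => values_eq.
exists S0, ys; split=> //; split=> [y Yy|S].
- by apply: le_trans (f_le_max_over_Y S0 Yy) _; rewrite -values_eq min_over_sets_le.
- by apply: le_trans (f_le_max_over_Y S0 Yys) _; rewrite -values_eq min_over_sets_le.
Qed.

End SubmodularMinimax.

Theorem proposition1 (R : realType) (n m : nat)
  (Y : set 'rV[R]_m) (f : {set 'I_n} -> 'rV[R]_m -> R) :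
  Y !=set0 -> convex_subset Y -> compact Y ->
  (forall y, submodular (fun S => f S y)) ->
  (forall S, concave_fun (f S)) ->
  (forall S, continuous (f S)) ->
  let maxmin := sup [set inf [set f S y | S in [set: {set 'I_n}]] | y in Y] in
  let minmax := inf [set sup [set f S y | y in Y] | S in [set: {set 'I_n}]] in
  let relax := fun D : set ('I_n -> R) =>
    inf [set sup [set lovasz2 f x y | y in Y] | x in D] in
  maxmin <= minmax /\
  (relax (@cube01 R n) = relax (@vert01 R n) ->
     maxmin = minmax /\ minmax = relax (@cube01 R n) /\
     exists S0 y0, saddle_point f Y S0 y0).
Proof.
move=> Y0 Y_convex Y_compact f_submod f_concave f_cont.
rewrite -/(maxmin Y f) -/(minmax Y f) -/(relax Y f).
have weak := maxmin_le_minmax Y f Y0 Y_compact f_cont.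
split=> // relax_eq.
have relax_le := relax_cube_le_maxmin Y f Y0 Y_convex Y_compact f_submod f_concave f_cont.
have le_relax := minmax_le_relax_vert Y f.
have values_eq : maxmin Y f = minmax Y f.
  by apply/le_anti; rewrite weak /= (le_trans le_relax) // -relax_eq.
split=> //; split; last exact: saddle_point_of_maxmin_eq Y0 Y_compact f_cont values_eq.
by apply/le_anti; rewrite {1}relax_eq le_relax /= -values_eq.
Qed.
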